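(* Let $0\le r\le n$, $A\in\mathcal{A}_{n+1,r+1}$, and fix a tiling of $\Gamma(X(A))$. At any stage of the fusion-exchange algorithm applied to $A$, if an edge $e$ carries a nonempty label $L$ and $x=L_{\max}$, then $e$ lies in the $x$-strip.
   Context: Words and diagrams. For $0\le r\le n$ let $B_n^r$ be the set of words $X\in\{H,L,0\}^n$ with exactly $r$ letters $L$. If $X$ has $k$ letters $H$, $r$ letters $L$ and $\ell$ letters $0$, its rhombic diagram $\Gamma(X)$ is the closed region bounded by two paths of unit steps, using the directions west (horizontal), south (vertical) and southwest (diagonal: a fixed unit vector strictly between west and south), both going from a point $P$ to a point $Q$: the northwest boundary consists of $\ell$ west steps, then $r$ southwest steps, then $k$ south steps; the southeast boundary is obtained by reading $X$ left to right and taking a west step for each $0$, a southwest step for each $L$, a south step for each $H$. A tiling of $\Gamma(X)$ is a tiling by unit rhombi of three kinds: squares (horizontal and vertical edges), tall rhombi (vertical and diagonal edges), short rhombi (horizontal and diagonal edges). A west-strip (resp. north-strip, northwest-strip) is a maximal set of tiles connected through shared vertical (resp. horizontal, diagonal) edges; each runs from an edge of the southeast boundary to an edge of the northwest boundary, and each edge of the tiling lies in exactly one strip, of the type of its direction. Each tile has two edges on its lower-right side: its east edge (vertical for squares and tall rhombi, diagonal for short rhombi) and its south edge (horizontal for squares and short rhombi, diagonal for tall rhombi); the parallel edges on its upper-left side are its west and north edges. Assemblées. An assemblée of size $(m,s)$ is a collection of $s$ nonempty, pairwise disjoint, linearly ordered sets (blocks) with union $\{1,\dots,m\}$; the last element of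 a block is its block-end. Blocks are listed in the canonical order with decreasing block-ends, and the assemblée is identified with the concatenated word. $\mathcal{A}_{m,s}$ is the set of these. For $A\in\mathcal{A}_{n+1,r+1}$ with block-ends $b_1>\dots>b_{r+1}$, a non-block-end element $x$ is an increase if $x+1$ appears to the right of $x$ in $A$, and a decrease otherwise (so $n+1$, if not a block-end, is a decrease). $X(A)\in B_n^r$ is obtained from $A$ by deleting its last letter $b_{r+1}$ and replacing each increase by $H$, each decrease by $0$ and each remaining block-end by $L$. Fusion-exchange algorithm. A label is a finite, possibly empty, set of consecutive integers; for a nonempty label $L$, $L_{\max}$ is its largest element; for labels $E,S$ write $E\succ S$ if both are nonempty and $\min E=\max S+1$. Given $A\in\mathcal{A}_{n+1,r+1}$ and a tiling of $\Gamma(X(A))$: initially the southeast boundary edges, in order from $P$ to $Q$, receive the singleton labels of the letters of $A$ from left to right, $b_{r+1}$ omitted. Step: choose a tile whose east and south edges are labeled, say by $E$ and $S$, and whose west and north edges are not. (R I) If $E\succ S$ and the south edge is horizontal: west edge gets $E\cup S$, north edge gets $\emptyset$, place $\alpha$ in the tile. (R II) If $S\succ E$ and the east edge is vertical: north edge gets $E\cup S$, west edge gets $\emptyset$, place $\beta$. (R III) Otherwise: west edge gets $E$, north edge gets $S$, and place $q$ if $E\ne\emptyset$ and $S\ne\emptyset$. Repeat until every edge is labeled. For a letter $x\neq b_{r+1}$ of $A$, the $x$-strip is the strip containing the southeast boundary edge initially labeled $\{x\}$. *)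

From mathcomp Require Import all_boot.
Set Implicit Arguments. Unset Strict Implicit. Unset Printing Implicit Defensive.

(* LH = H (south step), LL = L (southwest step), L0 = 0 (west step). *)
Inductive letter := LH | LL | L0.

(* Position of a direction in the northwest boundary 0^l L^r H^k. *)
Definition rank (d : letter) : nat :=
  match d with L0 => 0 | LL => 1 | LH => 2 end.

Definition isH (d : letter) : bool := if d is LH then true else false.
Definition isL (d : letter) : bool := if d is LL then true else false.
Definition is0 (d : letter) : bool := if d is L0 then true else false.

Definition nw_word (X : seq letter) : seq letter :=
  nseq (count is0 X) L0 ++ nseq (count isL X) LL ++ nseq (count isH X) LH.

(* An assemblee is given by its list of blocks (each block a sequence = a
   linearly ordered set), listed in canonical order (decreasing block-ends). *)
Definition block_ends (B : seq (seq nat)) : seq nat := [seq last 0 b | b <- B].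

Definition is_assemblee (m s : nat) (B : seq (seq nat)) : Prop :=
  [/\ size B = s,
      all (fun b => b != [::]) B,
      perm_eq (flatten B) (iota 1 m) &
      sorted (fun x y => y < x) (block_ends B)].

Definition asm_word (B : seq (seq nat)) : seq nat := flatten B.

Definition is_increase (w : seq nat) (x : nat) : bool :=
  (x.+1 \in w) && (index x w < index x.+1 w).

(* letter of X(A) assigned to an element x (x <> b_{r+1}) of A *)
Definition dir_of (B : seq (seq nat)) (x : nat) : letter :=
  if x \in block_ends B then LL
  else if is_increase (asm_word B) x then LH else L0.

(* the word of A with its last letter b_{r+1} deleted *)
Definition asm_word' (B : seq (seq nat)) : seq nat :=
  take (size (asm_word B)).-1 (asm_word B).

Definition X_of (B : seq (seq nat)) : seq letter := map (dir_of B) (asm_word' B).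

Definition label := seq nat.   (* a finite set of integers *)
Definition lmax (E : label) : nat := \max_(y <- E) y.
Definition lmin (E : label) : nat := \big[minn/head 0 E]_(y <- E) y.
Definition lsucc (E S : label) : bool :=
  [&& E != [::], S != [::] & lmin E == (lmax S).+1].

(* An edge of a (partial) monotone path from P to Q: its direction, the name
   x of its strip (the x-strip, x being the letter of A initially labelling
   the southeast boundary edge the strip starts from), and its label. *)
Definition edge := (letter * nat * label)%type.
Definition edge0 : edge := (L0, 0, [::]).
Definition e_dir (e : edge) : letter := e.1.1.
Definition e_strip (e : edge) : nat := e.1.2.
Definition e_label (e : edge) : label := e.2.

(* initial labelled southeast boundary, edges in order from P to Q *)
Definition init_path (B : seq (seq nat)) : seq edge :=
  [seq (dir_of B x, x, [:: x]) | x <- asm_word' B].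

(* Processing one tile, given its east edge and south edge (consecutive on the
   current path, east edge first); returns (north edge, west edge).  The north
   edge is parallel to and in the same strip as the south edge; the west edge
   is parallel to and in the same strip as the east edge. *)
Definition tile_step (east south : edge) : edge * edge :=
  let: (d1, x1, E) := east in
  let: (d2, x2, Sl) := south in
  if lsucc E Sl && is0 d2 then ((d2, x2, [::]), (d1, x1, E ++ Sl))
  else if lsucc Sl E && isH d1 then ((d2, x2, E ++ Sl), (d1, x1, [::]))
  else ((d2, x2, Sl), (d1, x1, E)).

(* Adding the tile whose east and south edges are the edges at positions i and
   i+1 of the current path p (a tile exists there iff the two directions form a
   descent w.r.t. west < southwest < south); the north and west edges replace
   them on the new path. *)
Definition flip (p : seq edge) (i : nat) : option (seq edge) :=
  if (i.+1 < size p) && (rank (e_dir (nth edge0 p i.+1)) < rank (e_dir (nth edge0 p i)))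
  then let ns := tile_step (nth edge0 p i) (nth edge0 p i.+1) in
       Some (take i p ++ [:: ns.1; ns.2] ++ drop i.+2 p)
  else None.

Fixpoint run (p : seq edge) (fs : seq nat) : option (seq edge) :=
  match fs with
  | [::] => Some p
  | i :: fs' => if flip p i is Some p' then run p' fs' else None
  end.

From mathcomp Require Import all_boot.

Set Implicit Arguments.
Unset Strict Implicit.
Unset Printing Implicit Defensive.

(* The x-strip of an edge never changes along the algorithm, so it suffices
   that every tile step preserves "the strip of a labelled edge is the strip of
   the largest element of its label".  Rule R III moves labels inside their
   strips; under rules R I and R II the fused label E ∪ S with E ≻ S (resp.
   S ≻ E) goes into the strip of E (resp. S), and since every element of S is
   below every element of E, the maximum of E ∪ S is that of E (resp. S).
   No property of the assemblée or of the tiling is needed. *)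

Definition in_lmax_strip (e : edge) : bool :=
  (e_label e != [::]) ==> (e_strip e == lmax (e_label e)).

Lemma lmax_seq1 x : lmax [:: x] = x.
Proof. by rewrite /lmax big_seq1. Qed.

Lemma lmax_cat E S : lmax (E ++ S) = maxn (lmax E) (lmax S).
Proof. by rewrite /lmax big_cat. Qed.

Lemma lmin_le_lmax E : E != [::] -> lmin E <= lmax E.
Proof.
case: E => [//|a E] _.
apply: (@leq_trans a); first by rewrite /lmin big_cons geq_minl.
by rewrite /lmax big_cons leq_maxl.
Qed.

Lemma lmax_lsucc E S : lsucc E S -> lmax S < lmax E.
Proof.
by case/and3P=> nE _ /eqP minE; rewrite -ltnS -minE ltnS lmin_le_lmax.
Qed.

Lemma lmax_cat_lsuccl E S : lsucc E S -> lmax (E ++ S) = lmax E.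
Proof. by move/lmax_lsucc/ltnW/maxn_idPl; rewrite lmax_cat. Qed.

Lemma lmax_cat_lsuccr E S : lsucc S E -> lmax (E ++ S) = lmax S.
Proof. by move/lmax_lsucc/ltnW/maxn_idPr; rewrite lmax_cat. Qed.

Section RunInvariant.

Variable P : pred edge.
Hypothesis tile_stepP : forall east south, P east -> P south ->
  P (tile_step east south).1 && P (tile_step east south).2.

Lemma flip_all p i p' : all P p -> flip p i = Some p' -> all P p'.
Proof.
rewrite /flip; case: ifP => [/andP[lt_i1 _] allp [<-]|//].
have /andP[Pnorth Pwest] := tile_stepP (all_nthP edge0 allp i (ltnW lt_i1))
                                           (all_nthP edge0 allp i.+1 lt_i1).
rewrite -(cat_take_drop i p) all_cat in allp; case/andP: allp => all_take all_drop.
rewrite -(cat_take_drop 2 (drop i p)) all_cat drop_drop add2n in all_drop.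
by rewrite /= all_cat all_take /= Pnorth Pwest; case/andP: all_drop.
Qed.

Lemma run_all p fs p' : all P p -> run p fs = Some p' -> all P p'.
Proof.
elim: fs p => [|i fs IH] p allp /=; first by case=> <-.
by case flip_p: (flip p i) => [q|//]; exact: IH (flip_all allp flip_p).
Qed.

End RunInvariant.

Lemma tile_step_in_lmax_strip east south :
  in_lmax_strip east -> in_lmax_strip south ->
  in_lmax_strip (tile_step east south).1 && in_lmax_strip (tile_step east south).2.
Proof.
case: east => [[d1 x1] E]; case: south => [[d2 x2] S].
rewrite /in_lmax_strip /e_label /e_strip /= => okE okS.
case: ifP => [/andP[succES _]|_] /=.
  case/and3P: (succES) => nE _ _.
  by rewrite lmax_cat_lsuccl // -(eqP (implyP okE nE)) eqxx !implybT.
case: ifP => [/andP[succSE _]|_] /=; last by rewrite okE okS.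
case/and3P: (succSE) => nS _ _.
by rewrite lmax_cat_lsuccr // -(eqP (implyP okS nS)) eqxx !implybT.
Qed.

Lemma init_path_in_lmax_strip B : all in_lmax_strip (init_path B).
Proof.
rewrite all_map; apply/allP => x _.
by rewrite /in_lmax_strip /e_strip /e_label /= lmax_seq1.
Qed.

Theorem lemma3p3 (n r : nat) (B : seq (seq nat)) (fs : seq nat) (k : nat)
    (p : seq edge) (j : nat) :
  r <= n ->
  is_assemblee n.+1 r.+1 B ->
  (* fs is an execution of the algorithm on a tiling of Gamma(X(A)):
     it ends on the northwest boundary *)
  (exists q, run (init_path B) fs = Some q /\ map e_dir q = nw_word (X_of B)) ->
  k <= size fs ->
  (* p is the labelled frontier after k steps *)
  run (init_path B) (take k fs) = Some p ->
  j < size p ->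
  e_label (nth edge0 p j) != [::] ->
  e_strip (nth edge0 p j) = lmax (e_label (nth edge0 p j)).
Proof.
move=> _ _ _ _ run_k lt_j labelled.
have all_p := run_all tile_step_in_lmax_strip (init_path_in_lmax_strip B) run_k.
by apply/eqP; move: (all_nthP edge0 all_p j lt_j); rewrite /in_lmax_strip labelled.
Qed.
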